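(* Let $n\geqslant 3$ and $m\geqslant 1$ be integers, let $I_m=(i_1,\ldots,i_m)$ be a vector of $m$ pairwise different elements of $\{1,\ldots,n\}$, and let $P_m=((j_1,k_1),\ldots,(j_m,k_m))$ be a vector of $m$ pairs formed by $2m$ pairwise different elements of $\{2,\ldots,n\}$. Then the function $f_{I_m}^{P_m}$ is an eigenfunction of the Star graph $S_n$ with eigenvalue $n-m-1$.
   Context: Write a permutation $\pi$ of $\{1,\ldots,n\}$ as the sequence $[\pi_1\pi_2\ldots\pi_n]$. The Star graph $S_n$ has vertex set $\mathrm{Sym}_n$, and two permutations are adjacent iff one is obtained from the other by exchanging the entries in positions $1$ and $i$ for some $2\leqslant i\leqslant n$ (this is the Cayley graph of $\mathrm{Sym}_n$ generated by the transpositions $(1\ i)$, $2\le i\le n$). For a graph $\Gamma$, a function $f:V(\Gamma)\to\mathbb{R}$ is an eigenfunction with eigenvalue $\theta$ if $f\not\equiv 0$ and $\theta f(x)=\sum_{y\in N(x)}f(y)$ for every vertex $x$, where $N(x)$ is the neighbourhood of $x$. The function $f_{I_m}^{P_m}:\mathrm{Sym}_n\to\mathbb{R}$ is defined as follows: $f_{I_m}^{P_m}(\pi)=0$ if there is $t\in\{1,\ldots,m\}$ with $\pi_{j_t}\ne i_t$ and $\pi_{k_t}\ne i_t$; otherwise, for each $t$ exactly one of $\pi_{j_t}=i_t$, $\pi_{k_t}=i_t$ holds, and setting $x_t=1$ if $\pi_{j_t}=i_t$ and $x_t=0$ if $\pi_{k_t}=i_t$, one puts $f_{I_m}^{P_m}(\pi)=1$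 if $(x_1,\ldots,x_m)$ contains an even number of $1$s and $f_{I_m}^{P_m}(\pi)=-1$ if it contains an odd number of $1$s. *)

From HB Require Import structures.
From mathcomp Require Import all_boot all_order all_algebra all_fingroup.
From mathcomp Require Import reals.
Set Implicit Arguments. Unset Strict Implicit. Unset Printing Implicit Defensive.
Import Order.TTheory GRing.Theory Num.Theory.
Local Open Scope ring_scope.

(* Permutations of {1,...,n} are encoded as s : 'S_n = {perm 'I_n}, both
   positions and values shifted down by one: s p is the entry at position p+1,
   representing the value (s p)+1.  Position 1 is the ordinal with value 0. *)

(* Star graph adjacency: y is obtained from x by exchanging the entries in
   positions 1 and i (i >= 2), i.e. y p = x (tperm p1 pi p). *)
Definition star_adj (n : nat) : rel 'S_n :=
  fun x y => [exists p1 : 'I_n, exists pi : 'I_n,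
    [&& nat_of_ord p1 == 0%N, nat_of_ord pi != 0%N & y == (tperm p1 pi * x)%g]].

Definition is_eigenfunction (R : numDomainType) (T : finType) (adj : rel T)
    (f : T -> R) (theta : R) : Prop :=
  (exists x, f x != 0) /\
  (forall x, theta * f x = \sum_(y | adj x y) f y).

Definition fIP (R : numDomainType) (n m : nat) (i j k : 'I_m -> 'I_n)
    (s : 'S_n) : R :=
  if [exists t : 'I_m, (s (j t) != i t) && (s (k t) != i t)] then 0
  else (-1) ^+ #|[set t : 'I_m | s (j t) == i t]|.

From HB Require Import structures.
From mathcomp Require Import all_boot all_order all_algebra all_fingroup.
From mathcomp Require Import reals.
Import Order.TTheory GRing.Theory Num.Theory.
Local Open Scope ring_scope.

(* f_{I_m}^{P_m} is the product over t of a factor that only looks at the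
   entries in positions j_t and k_t: -1 if i_t sits at j_t, 1 if it sits at
   k_t, and 0 otherwise.  The neighbour of x obtained by exchanging position 1
   with a position outside all pairs has the same value as x; there are
   n - 1 - 2m such neighbours.  The two neighbours obtained by exchanging
   position 1 with j_t or with k_t only change the t-th factor, and their two
   t-th factors add up to the t-th factor of x, so together they contribute
   f(x).  Hence the neighbour sum is (n - 1 - 2m) f(x) + m f(x). *)

Lemma star_adjE (n : nat) (x y : 'S_n.+1) :
  star_adj x y = [exists p, (p != ord0) && (y == tperm ord0 p * x)%g].
Proof.
apply/existsP/existsP => [[p1 /existsP[p /and3P[/eqP p1_0 p_0 yE]]] | [p /andP[p_0 yE]]].
  have p1E : p1 = ord0 by apply: val_inj.
  by exists p; rewrite p1E in yE; rewrite yE andbT.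
by exists ord0; apply/existsP; exists p; rewrite yE andbT.
Qed.

Lemma sum_star_adj (n : nat) (V : nmodType) (f : 'S_n.+1 -> V) (x : 'S_n.+1) :
  \sum_(y | star_adj x y) f y = \sum_(p | p != ord0) f (tperm ord0 p * x)%g.
Proof.
have swap_inj : injective (fun p : 'I_n.+1 => tperm ord0 p * x)%g.
  by move=> p q /mulIg/(congr1 (fun s : 'S_n.+1 => s ord0)); rewrite !tpermL.
rewrite -(big_imset f (in2W swap_inj)); apply: eq_bigl => y.
rewrite star_adjE; apply/existsP/imsetP => [[p /andP[p_0 /eqP->]] | [p p_0 ->]].
  by exists p.
by exists p; rewrite eqxx andbT.
Qed.

Section PairSign.
Variables (R : numDomainType) (T : eqType).

Definition pair_sign (v b c : T) : R :=
  if b == v then -1 else if c == v then 1 else 0.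

Lemma pair_sign_split v a b c : a != b -> a != c -> b != c ->
  pair_sign v a c + pair_sign v b a = pair_sign v b c.
Proof.
rewrite /pair_sign => ab ac bc.
have [<-|bv] := eqVneq b v; first by rewrite (negbTE ab) eq_sym (negbTE bc) add0r.
have [av|_] := eqVneq a v; last by rewrite addr0.
by rewrite -av eq_sym (negbTE ac) addNr.
Qed.

End PairSign.
Arguments pair_sign R {T}.

Section FIP.
Variables (R : numDomainType) (n m : nat) (i j k : 'I_m -> 'I_n).

Lemma fIP_prod s : fIP R i j k s = \prod_t pair_sign R (i t) (s (j t)) (s (k t)).
Proof.
rewrite /fIP; case: ifPn => [/existsP[t /andP[jt kt]] | /existsPn nz].
  by rewrite (bigD1 t) //= /pair_sign (negbTE jt) (negbTE kt) mul0r.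
rewrite -prodr_const big_mkcond; apply: eq_bigr => t _.
rewrite inE /pair_sign; have := nz t; rewrite negb_and !negbK.
by case: eqP => //= _ ->.
Qed.

Lemma fIP_neq0 (s : 'S_n) : (forall t, s (j t) = i t) -> fIP R i j k s != 0.
Proof.
move=> sji; rewrite /fIP; case: existsP => [[t]|_]; first by rewrite sji eqxx.
by rewrite expf_neq0 // oppr_eq0 oner_eq0.
Qed.

End FIP.

Lemma exists_perm_inj {I T : finType} {f g : I -> T} :
  injective f -> injective g -> exists s : {perm T}, forall t, s (f t) = g t.
Proof.
move=> f_inj g_inj.
suff [s sfg] : exists s : {perm T}, {in enum I, forall t, s (f t) = g t}.
  by exists s => t; apply: sfg; rewrite mem_enum.
elim: (enum I) => [|t0 r [s sfg]]; first by exists 1%g.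
exists (s * tperm (s (f t0)) (g t0))%g => t; rewrite inE permM.
have [-> _|t_t0 /= tr] := eqVneq t t0; first by rewrite tpermL.
rewrite (sfg t tr) tpermD // ?(inj_eq g_inj) 1?eq_sym //.
by rewrite -(sfg t tr) (inj_eq perm_inj) (inj_eq f_inj).
Qed.

Section StarSwaps.
Variables (R : numDomainType) (n m : nat) (i j k : 'I_m -> 'I_n.+1).
Hypotheses (j_inj : injective j) (k_inj : injective k).
Hypothesis jk_neq : forall t t', j t != k t'.
Hypotheses (j_neq0 : forall t, j t != ord0) (k_neq0 : forall t, k t != ord0).

Local Notation f := (fIP R i j k).

Lemma fIP_swap_free (x : 'S_n.+1) p :
  (forall t, j t != p) -> (forall t, k t != p) -> f (tperm ord0 p * x)%g = f x.
Proof.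
move=> jp kp; rewrite !fIP_prod; apply: eq_bigr => t _.
by rewrite !permM !tpermD // eq_sym.
Qed.

Lemma fIP_swap_pair (x : 'S_n.+1) t :
  f (tperm ord0 (j t) * x)%g + f (tperm ord0 (k t) * x)%g = f x.
Proof.
pose rest (y : 'S_n.+1) := \prod_(s | s != t) pair_sign R (i s) (y (j s)) (y (k s)).
have fE y : f y = pair_sign R (i t) (y (j t)) (y (k t)) * rest y.
  by rewrite fIP_prod (bigD1 t).
have rest_swap p : (forall s, s != t -> (j s != p) && (k s != p)) ->
    rest (tperm ord0 p * x)%g = rest x.
  move=> away; apply: eq_bigr => s /away/andP[jp kp].
  by rewrite !permM !tpermD // eq_sym.
rewrite !fE !rest_swap -?mulrDl => [|s st|s st]; last 2 first.
- by rewrite jk_neq (inj_eq k_inj) st.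
- by rewrite (inj_eq j_inj) st eq_sym jk_neq.
congr (_ * _); rewrite !permM !tpermR !tpermD // 1?eq_sym //.
by apply: pair_sign_split; rewrite (inj_eq perm_inj) // eq_sym.
Qed.

Lemma sum_fIP_swap (x : 'S_n.+1) :
  \sum_(p | p != ord0) f (tperm ord0 p * x)%g = n%:R * f x - m%:R * f x.
Proof.
pose g p := f (tperm ord0 p * x)%g - f x.
pose J := j @: [set: 'I_m]; pose K := k @: [set: 'I_m].
have g_free p : p \notin [predU J & K] -> g p = 0.
  rewrite !inE negb_or => /andP[/imsetP jp /imsetP kp].
  rewrite /g fIP_swap_free ?subrr // => t; apply/eqP => tp.
    by apply: jp; exists t.
  by apply: kp; exists t.
have pairs_neq0 p : p \in [predU J & K] -> p != ord0.
  by rewrite !inE => /orP[] /imsetP[t _ ->].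
have -> : \sum_(p | p != ord0) f (tperm ord0 p * x)%g =
    \sum_(p : 'I_n.+1 | p != ord0) f x + \sum_(p | p != ord0) g p.
  by rewrite -big_split; apply: eq_bigr => p _; rewrite /= /g addrCA subrr addr0.
rewrite sumr_const cardC1 card_ord mulr_natl; congr (_ + _).
rewrite (bigID (mem [predU J & K])) /= [X in _ + X]big1 ?addr0 => [|p /andP[_ /g_free]//].
rewrite (eq_bigl [predU J & K]) => [|p]; last first.
  by rewrite andb_idl // => /pairs_neq0.
rewrite bigU ?(big_imset _ (in2W j_inj)) ?(big_imset _ (in2W k_inj)) /=; last first.
  rewrite disjoint_subset; apply/subsetP => _ /imsetP[t _ ->].
  by rewrite inE; apply/imsetP => -[t' _ /eqP]; rewrite (negbTE (jk_neq t t')).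
rewrite -big_split /= (eq_bigr (fun _ => - f x)) => [|t _]; last first.
  by rewrite /g addrACA fIP_swap_pair addrA subrr add0r.
by rewrite sumr_const cardsT card_ord mulr_natl mulNrn.
Qed.

End StarSwaps.

Theorem proposition1 (R : realType) (n m : nat)
    (i j k : 'I_m -> 'I_n) :
  (3 <= n)%N -> (1 <= m)%N ->
  injective i ->
  injective j -> injective k -> (forall t t', j t != k t') ->
  (forall t, nat_of_ord (j t) != 0%N) -> (forall t, nat_of_ord (k t) != 0%N) ->
  is_eigenfunction (@star_adj n) (fIP R i j k) (n%:R - m%:R - 1).
Proof.
case: n i j k => [|n] i j k // _ _ i_inj j_inj k_inj jk_neq j_neq0 k_neq0.
split.
  have [s sji] := exists_perm_inj j_inj i_inj.
  by exists s; apply: fIP_neq0.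
move=> x; rewrite sum_star_adj sum_fIP_swap //.
by rewrite -natr1 addrAC addrK mulrBl.
Qed.
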